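(* Let $K=3$ and let $l\ge m>0$ be integers. Then \[ h(l,\,m,\,0)\ \le\ h(l-1,\,m-1,\,0)+2. \]
   Context: For a vector $\vec n=(n_1,n_2,n_3)$ of nonnegative integers, the following random process is run: stocks start at $\vec n^{(0)}=\vec n$; at each step $t=1,2,\dots$, as long as at least two coordinates of $\vec n^{(t-1)}$ are nonzero, an index $i$ is chosen uniformly at random (independently of the past) among the indices with $n_i^{(t-1)}>0$, and $\vec n^{(t)}=\vec n^{(t-1)}-\vec e_i$ ($\vec e_i$ the $i$-th standard unit vector). The process stops at the first time $T$ at which at most one coordinate is nonzero, and $h(\vec n)=\mathbb{E}[T]$. Equivalently, with $\operatorname{support}(\vec n)=\{i:n_i\ne 0\}$: $h(\vec n)=0$ if $|\operatorname{support}(\vec n)|\le1$, and otherwise $h(\vec n)=1+\frac{1}{|\operatorname{support}(\vec n)|}\sum_{i\in\operatorname{support}(\vec n)}h(\vec n-\vec e_i)$. *)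

From mathcomp Require Import all_boot all_order all_algebra.
Set Implicit Arguments. Unset Strict Implicit. Unset Printing Implicit Defensive.
Import Order.TTheory GRing.Theory Num.Theory.
Local Open Scope ring_scope.

Definition supp3 (n1 n2 n3 : nat) : nat :=
  ((n1 != 0%N) + (n2 != 0%N) + (n3 != 0%N))%N.

(* The fuel k is the total stock n1+n2+n3, which decreases by 1 at each step. *)
Fixpoint hf (k : nat) (n1 n2 n3 : nat) : rat :=
  match k with
  | 0%N => 0
  | k'.+1 =>
    if (supp3 n1 n2 n3 <= 1)%N then 0
    else 1 + (supp3 n1 n2 n3)%:R^-1 *
         ((if n1 != 0%N then hf k' n1.-1 n2 n3 else 0)
        + (if n2 != 0%N then hf k' n1 n2.-1 n3 else 0)
        + (if n3 != 0%N then hf k' n1 n2 n3.-1 else 0))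
  end.

(* h(n1,n2,n3) = expected stopping time of the process (K = 3). *)
Definition h (n1 n2 n3 : nat) : rat := hf (n1 + n2 + n3) n1 n2 n3.

From mathcomp Require Import all_boot all_order all_algebra.
From mathcomp Require Import lra.
Import Order.TTheory GRing.Theory Num.Theory.
Local Open Scope ring_scope.

(* On the face n3 = 0 with both stocks positive, each step removes one unit
   from the first or the second stock with probability 1/2, so
   h(a+1,b+1,0) = 1 + (h(a,b+1,0) + h(a+1,b,0))/2.  The difference
   h(a+1,b+1,0) - h(a,b,0) is therefore the average of the two neighbouring
   differences, and a double induction on (a,b) reduces the claim to the
   boundary lines a = 0 and b = 0, i.e. to h(1,b,0) <= 2 and h(a,1,0) <= 2:
   there the same recursion reads h = 1 + h'/2 with h' the previous value. *)

Lemma h_n00 a : h a 0 0 = 0.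
Proof. by case: a. Qed.

Lemma h_0n0 b : h 0 b 0 = 0.
Proof. by case: b. Qed.

Lemma h_SS0 a b : h a.+1 b.+1 0 = 1 + 2^-1 * (h a b.+1 0 + h a.+1 b 0).
Proof. by rewrite /h !addn0 addSn [LHS]/= addr0 -addSnnS. Qed.

Lemma h_1n0_le2 b : h 1 b 0 <= 2.
Proof.
elim: b => [|b IHb]; first by rewrite h_n00.
rewrite h_SS0 h_0n0; lra.
Qed.

Lemma h_n10_le2 a : h a 1 0 <= 2.
Proof.
elim: a => [|a IHa]; first by rewrite h_0n0.
rewrite h_SS0 h_n00; lra.
Qed.

Lemma h_SS0_le a b : h a.+1 b.+1 0 <= h a b 0 + 2.
Proof.
elim: a b => [|a IHa] b; first by rewrite h_0n0 add0r h_1n0_le2.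
elim: b => [|b IHb]; first by rewrite h_n00 add0r h_n10_le2.
have := IHa b.+1; rewrite [h a.+2 _ _]h_SS0 [h a.+1 b.+1 _]h_SS0; lra.
Qed.

Theorem lemma7 (l m : nat) (hml : (m <= l)%N) (hm : (0 < m)%N) :
  h l m 0 <= h l.-1 m.-1 0 + 2.
Proof.
case: m hm hml => // m _; case: l => // l _.
exact: h_SS0_le.
Qed.
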